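(* Let $n$ be a positive integer and let $G$ be a bipartite graph having two vertices $x$ and $y$ in the same partite set such that $N(x)$ is a proper subset of $N(y)$. If $G[\overline{K_n}]$ admits a local distance antimagic labeling, then $\chi_{ld}(G[\overline{K_{n}}])\geq 3$.
   Context: All graphs are finite, simple and undirected. $N(v)$ denotes the open neighborhood of $v$. For a graph $G=(V,E)$ of order $N$ without isolated vertices, a bijection $f\colon V\to\{1,2,\dots,N\}$ is a local distance antimagic labeling if $w(u)\neq w(v)$ for every edge $uv$, where $w(u)=\sum_{x\in N(u)}f(x)$. $\chi_{ld}(G)$ is the minimum number of distinct weights over all local distance antimagic labelings of $G$. $\overline{K_n}$ is the edgeless graph on $n$ vertices. The lexicographic product $G[H]$ has vertex set $V(G)\times V(H)$, with $(g,h)$ adjacent to $(g',h')$ iff $gg'\in E(G)$, or $g=g'$ and $hh'\in E(H)$. *)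

From mathcomp Require Import all_boot.
Set Implicit Arguments. Unset Strict Implicit. Unset Printing Implicit Defensive.

Definition simple_graph (T : finType) (e : rel T) : Prop :=
  symmetric e /\ irreflexive e.

Definition nbhd (T : finType) (e : rel T) (v : T) : {set T} := [set u | e v u].

Definition bipartition (T : finType) (e : rel T) (A : {set T}) : Prop :=
  forall u v, e u v -> (u \in A) != (v \in A).

Definition bipartite (T : finType) (e : rel T) : Prop :=
  exists A : {set T}, bipartition e A.

Definition edgeless (n : nat) : rel 'I_n := fun _ _ => false.
Arguments edgeless n : clear implicits.

Definition lexprod (T U : finType) (eG : rel T) (eH : rel U) : rel (T * U) :=
  fun p q => eG p.1 q.1 || ((p.1 == q.1) && eH p.2 q.2).

Definition no_isolated (T : finType) (e : rel T) : Prop :=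
  forall v : T, exists u : T, e v u.

(* A labeling is a bijection f : V -> 'I_#|V|; the label of v is (f v).+1,
   so labels range over {1, ..., N} with N = #|V|. *)
Definition weight (T : finType) (e : rel T) (f : {ffun T -> 'I_#|T|}) (v : T)
  : nat := \sum_(u in nbhd e v) (f u).+1.

Definition is_ld_labeling (T : finType) (e : rel T) (f : {ffun T -> 'I_#|T|})
  : bool :=
  injectiveb f && [forall u, forall v, e u v ==> (weight e f u != weight e f v)].

(* G admits a local distance antimagic labeling (the notion is defined for
   graphs without isolated vertices). *)
Definition admits_ld_labeling (T : finType) (e : rel T) : Prop :=
  no_isolated e /\ exists f, is_ld_labeling e f.

Definition num_weights (T : finType) (e : rel T) (f : {ffun T -> 'I_#|T|})
  : nat := size (undup [seq weight e f v | v <- enum T]).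

(* chi_ld: minimum number of distinct weights over all local distance
   antimagic labelings (default #|T|.+1 if there is none, irrelevant here). *)
Definition chi_ld (T : finType) (e : rel T) : nat :=
  \big[minn/#|T|.+1]_(f : {ffun T -> 'I_#|T|} | is_ld_labeling e f)
     num_weights e f.

From mathcomp Require Import all_boot.

Set Implicit Arguments.
Unset Strict Implicit.
Unset Printing Implicit Defensive.

(* Proof idea: in G[K_n-bar] the neighbourhood of (v, i) is N(v) x 'I_n, so
   N(x) a proper subset of N(y) makes N(x, i) a proper subset of N(y, i); as
   labels are positive, w(x, i) < w(y, i).  A neighbour (u, j) of (x, i) is
   adjacent to both, so its weight differs from both of theirs: every labeling
   has at least three distinct weights. *)

Lemma proper_ltn_sum (U : finType) (A B : {set U}) (F : U -> nat) :
  (forall u, 0 < F u) -> A \proper B -> \sum_(u in A) F u < \sum_(u in B) F u.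
Proof.
move=> F_gt0 /properP [sAB [z zB zNA]].
rewrite [X in _ < X](big_setID A) /= (setIidPr sAB) -[X in X < _]addn0 ltn_add2l.
have zBA : z \in B :\: A by rewrite inE zB zNA.
by rewrite (bigD1 z zBA) /= (leq_trans (F_gt0 z) (leq_addr _ _)).
Qed.

Lemma preimset_proper (aT rT : finType) (f : aT -> rT) (g : rT -> aT)
    (A B : {set rT}) :
  cancel g f -> A \proper B -> f @^-1: A \proper f @^-1: B.
Proof.
move=> gK /properP [sAB [z zB zNA]]; apply/properP; split; first exact: preimsetS.
by exists (g z); rewrite !inE gK.
Qed.

Section LexprodEdgeless.

Variables (T : finType) (e : rel T) (n : nat).

Lemma lexprod_edgeless (p q : T * 'I_n) :
  lexprod e (edgeless n) p q = e p.1 q.1.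
Proof. by rewrite /lexprod /edgeless andbF orbF. Qed.

Lemma nbhd_lexprod_edgeless (p : T * 'I_n) :
  nbhd (lexprod e (edgeless n)) p = fst @^-1: nbhd e p.1.
Proof. by apply/setP => q; rewrite !inE lexprod_edgeless. Qed.

Lemma proper_nbhd_lexprod_edgeless (i : 'I_n) (x y : T) :
  nbhd e x \proper nbhd e y ->
  nbhd (lexprod e (edgeless n)) (x, i) \proper nbhd (lexprod e (edgeless n)) (y, i).
Proof.
rewrite !nbhd_lexprod_edgeless.
exact: (@preimset_proper _ _ fst (fun v => (v, i))).
Qed.

End LexprodEdgeless.

Section LocalDistanceAntimagic.

Variables (T : finType) (e : rel T).

Lemma ld_labeling_weight_neq (f : {ffun T -> 'I_#|T|}) (u v : T) :
  is_ld_labeling e f -> e u v -> weight e f u != weight e f v.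
Proof. by case/andP=> _ /forallP /(_ u) /forallP /(_ v) /implyP; apply. Qed.

Lemma weight_proper_ltn (f : {ffun T -> 'I_#|T|}) (u v : T) :
  nbhd e u \proper nbhd e v -> weight e f u < weight e f v.
Proof. exact: proper_ltn_sum. Qed.

Lemma num_weights_le_card (f : {ffun T -> 'I_#|T|}) : num_weights e f <= #|T|.
Proof. by rewrite /num_weights (leq_trans (size_undup _)) // size_map -cardT. Qed.

Lemma num_weights_ge3 (f : {ffun T -> 'I_#|T|}) (a b c : T) :
  uniq [:: weight e f a; weight e f b; weight e f c] -> 3 <= num_weights e f.
Proof.
move=> uniq_abc; apply: (uniq_leq_size uniq_abc) => w.
by rewrite !inE mem_undup => /or3P [] /eqP ->; apply: map_f; rewrite mem_enum.
Qed.

Lemma ld_labeling_three_weights (f : {ffun T -> 'I_#|T|}) (x y u : T) :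
  is_ld_labeling e f -> nbhd e x \proper nbhd e y -> e x u ->
  3 <= num_weights e f.
Proof.
move=> ld_f pxy exu.
have eyu : e y u.
  by have := subsetP (proper_sub pxy) u; rewrite !inE; apply.
apply: (@num_weights_ge3 f x y u).
rewrite /= !inE negb_or (ltn_eqF (weight_proper_ltn f pxy)).
by rewrite !ld_labeling_weight_neq.
Qed.

(* The existing labeling also bounds the junk value #|T|.+1 of an empty minimum. *)
Lemma chi_ld_ge (k : nat) :
  (exists f, is_ld_labeling e f) ->
  (forall f, is_ld_labeling e f -> k <= num_weights e f) ->
  k <= chi_ld e.
Proof.
move=> [f0 ld_f0] k_le; apply: (big_ind (fun m => k <= m)) => //.
- by rewrite (leq_trans (k_le f0 ld_f0)) // (leq_trans (num_weights_le_card f0)).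
- by move=> a b ka kb; rewrite leq_min ka kb.
Qed.

End LocalDistanceAntimagic.

Theorem mainTheorem8 (T : finType) (e : rel T) (n : nat) (x y : T) :
  0 < n ->
  simple_graph e ->
  (exists A : {set T}, bipartition e A /\ (x \in A) = (y \in A)) ->
  nbhd e x \proper nbhd e y ->
  admits_ld_labeling (lexprod e (edgeless n)) ->
  3 <= chi_ld (lexprod e (edgeless n)).
Proof.
move=> n_gt0 _ _ pxy [no_iso ex_ld].
pose i : 'I_n := Ordinal n_gt0.
have [[u j] xu] := no_iso (x, i).
apply: (chi_ld_ge ex_ld) => f ld_f.
exact: ld_labeling_three_weights ld_f (proper_nbhd_lexprod_edgeless i pxy) xu.
Qed.
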